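(* Assume $d_{min}\ge d_{close}+d_{open}$, and let $R$ be a regular run whose initial state has Dir = open and GateStatus = opened. (1) If the positive significant moments of Dir form an infinite sequence $\gamma_1<\gamma_2<\gamma_3<\cdots$, then the positive significant moments of GateStatus form an infinite sequence $\delta_1<\delta_2<\delta_3<\cdots$ with $\delta_i\in(\gamma_i,\gamma_{i+1})$ for every $i$. (2) If the positive significant moments of Dir form a finite sequence $\gamma_1<\cdots<\gamma_n$, then the positive significant moments of GateStatus form a sequence $\delta_1<\cdots<\delta_n$ with $\delta_i\in(\gamma_i,\gamma_{i+1})$ for $i<n$ and $\delta_n>\gamma_n$.
   Context: Setting (evolving algebra for the railroad crossing). States are structures over a vocabulary containing: a finite universe Tracks; the reals and ExtendedReals $=\mathbb{R}\cup\{\infty\}$ with standard $<$ and $+$ ($\infty$ largest); a nullary real-valued symbol $\mathrm{CT}$ (current time); positive real constants $d_{close},d_{open},d_{min},d_{max}$ with $d_{close}<d_{min}\le d_{max}$; a unary function TrackStatus from Tracks to $\{\text{empty},\text{coming},\text{incrossing}\}$; a unary function Deadline from Tracks to ExtendedReals; a nullary Dir with values in $\{\text{open},\text{close}\}$; a nullary GateStatus with values in $\{\text{opened},\text{closed}\}$. Put $W=d_{min}-d_{close}$ and $\Delta_{close}=d_{close}+(d_{max}-d_{min})=d_{max}-W$. For a track $x$, $s(x)$ is the condition [$\mathrm{TrackStatus}(x)=\text{empty}$ or $\mathrm{CT}+d_{open}<\mathrm{Deadline}(x)$], and SafeToOpen is $\forall x\in\mathrm{Tracks}\ s(x)$. The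 program has two modules (agents). Gate: simultaneously OpenGate ''if Dir=open then GateStatus:=opened'' and CloseGate ''if Dir=close then GateStatus:=closed''. Controller: simultaneously, for every track $x$, SetDeadline$(x)$ ''if TrackStatus$(x)$=coming and Deadline$(x)=\infty$ then Deadline$(x):=\mathrm{CT}+W$'', SignalClose$(x)$ ''if $\mathrm{CT}=$Deadline$(x)$ then Dir:=close'', ClearDeadline$(x)$ ''if TrackStatus$(x)$=empty and Deadline$(x)<\infty$ then Deadline$(x):=\infty$'', together with SignalOpen ''if Dir=close and SafeToOpen then Dir:=open''. Executing a module means computing all updates it generates in the current state and performing them simultaneously (nothing happens if the update set is inconsistent). A module is enabled at a state if its update set is consistent and contains an update that changes the state. TrackStatus is external (changed only by the environment); Deadline, Dir, GateStatus are internal (changed only by the modules); other symbols are static. Runs: for $t\mapsto R(t)$, $t\in[0,\infty)$, let $\rho(t)$ be the reduct of $R(t)$ without CT. $R$ is a pre-run if all $R(t)$ share a superuniverse, $\mathrm{CT}=t$ in $R(t)$, and for every $\tau>0$ there are $0=t_0<\dots<t_n=\tau$ with $\rho$ constant on each $(t_i,t_{i+1})$. For a term $e$ (free variables fixed), $e_t$ is its value in $R(t)$, $e_{t+}$ (resp. $e_{t-}$, $t>0$) its constant value on some $(t,t+\epsilon)$ (resp. $(t-\epsilon,t)$); likewise $\rho(t\pm)$. $e$ holds over an interval if it holds at each point; $e$ becomes (is set to) $a$ at $t$ if $e_{t-}\ne a=e_t$ or $e_t\neq a=e_{t+}$. A moment $t$ is significant for $e$ if every neighbourhood of $t$ contains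 a moment $a$ with $e_a\ne e_t$; positive significant moments are those $>0$. A pre-run is a run if (i) whenever $\rho(t+)\neq\rho(t)$, $\rho(t+)$ is the CT-free reduct of the result of executing some modules at $R(t)$ (these agents fire at $t$), with external functions equal in $\rho(t)$ and $\rho(t+)$; (ii) whenever $t>0$ and $\rho(t)\ne\rho(t-)$, they differ only in external functions. An agent is immediate if it fires at every moment it is enabled; bounded if immediate or there is $b>0$ with no interval $(t,t+b)$ over which it is enabled but never fires. Initial states: TrackStatus$(x)$=empty and Deadline$(x)=\infty$ for every track $x$. A regular run is a run $R$ with $R(0)$ initial such that: (Train Motion) for each track $x$ there is a finite or infinite sequence $0=t_0<t_1<t_2<\cdots$ (the significant moments of $x$) with TrackStatus$(x)$=empty over each $[t_{3i},t_{3i+1})$, =coming over each $[t_{3i+1},t_{3i+2})$ where $d_{min}\le t_{3i+2}-t_{3i+1}\le d_{max}$, =incrossing over each $[t_{3i+2},t_{3i+3})$, and, if the sequence is finite with last element $t_k$, then $3\mid k$ and TrackStatus$(x)$=empty over $[t_k,\infty)$; (Controller Timing) Controller is immediate; (Gate Timing) Gate is bounded, there is no interval $(t,t+d_{close})$ over which Dir=close and GateStatus=opened both hold, and no interval $(t,t+d_{open})$ over which Dir=open and GateStatus=closed both hold. *)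

From Stdlib Require Import Reals Lra List.
Open Scope R_scope.
Set Implicit Arguments.

(** * Railroad crossing evolving algebra (Gurevich--Huggins style) *)

Inductive ER : Type := Fin (r : R) | Inf.

Definition ERlt (a b : ER) : Prop :=
  match a, b with
  | Fin x, Fin y => x < y
  | Fin _, Inf => True
  | Inf, _ => False
  end.

Inductive TStatus : Type := empty | coming | incrossing.
Inductive DirT : Type := open | close.
Inductive GStatus : Type := opened | closed.

Record Params : Type := mkParams {
  d_close : R; d_open : R; d_min : R; d_max : R }.

Definition W (p : Params) : R := d_min p - d_close p.

(** The CT-free part of a state (the superuniverse is fixed, so a state is
    determined by the values of the dynamic functions). *)
Record State (Tr : Type) : Type := mkState {
  TrackStatus : Tr -> TStatus;
  Deadline : Tr -> ER;
  Dir : DirT;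
  GateStatus : GStatus }.

Inductive Update (Tr : Type) : Type :=
  | UDeadline (x : Tr) (v : ER)
  | UDir (v : DirT)
  | UGate (v : GStatus).
Arguments UDir {Tr} v.
Arguments UGate {Tr} v.

Inductive Agent : Type := Gate | Controller.

Definition s_ok (p : Params) {Tr} (st : State Tr) (ct : R) (x : Tr) : Prop :=
  TrackStatus st x = empty \/ ERlt (Fin (ct + d_open p)) (Deadline st x).

Definition SafeToOpen (p : Params) {Tr} (st : State Tr) (ct : R) : Prop :=
  forall x, s_ok p st ct x.

Definition updates (p : Params) {Tr} (A : Agent) (st : State Tr) (ct : R)
  (u : Update Tr) : Prop :=
  match A with
  | Gate =>
      (Dir st = open /\ u = UGate opened) \/
      (Dir st = close /\ u = UGate closed)
  | Controller =>
      (exists x, TrackStatus st x = coming /\ Deadline st x = Inf /\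
                 u = UDeadline x (Fin (ct + W p))) \/
      (exists x, Deadline st x = Fin ct /\ u = UDir close) \/
      (exists x, TrackStatus st x = empty /\ ERlt (Deadline st x) Inf /\
                 u = UDeadline x Inf) \/
      (Dir st = close /\ SafeToOpen p st ct /\ u = UDir open)
  end.

Definition consistent {Tr} (U : Update Tr -> Prop) : Prop :=
  (forall x v1 v2, U (UDeadline x v1) -> U (UDeadline x v2) -> v1 = v2) /\
  (forall v1 v2, U (UDir v1) -> U (UDir v2) -> v1 = v2) /\
  (forall v1 v2, U (UGate v1) -> U (UGate v2) -> v1 = v2).

Definition applied {Tr} (U : Update Tr -> Prop) (st st' : State Tr) : Prop :=
  TrackStatus st' = TrackStatus st /\
  (forall x, (forall v, U (UDeadline x v) -> Deadline st' x = v) /\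
             ((forall v, ~ U (UDeadline x v)) -> Deadline st' x = Deadline st x)) /\
  ((forall v, U (UDir v) -> Dir st' = v) /\
   ((forall v, ~ U (UDir v)) -> Dir st' = Dir st)) /\
  ((forall v, U (UGate v) -> GateStatus st' = v) /\
   ((forall v, ~ U (UGate v)) -> GateStatus st' = GateStatus st)).

Definition exec (p : Params) {Tr} (M : Agent -> Prop) (st : State Tr) (ct : R)
  (st' : State Tr) : Prop :=
  let U := fun u => exists A, M A /\ updates p A st ct u in
  (consistent U /\ applied U st st') \/ (~ consistent U /\ st' = st).

Definition changes {Tr} (st : State Tr) (u : Update Tr) : Prop :=
  match u with
  | UDeadline x v => Deadline st x <> v
  | UDir v => Dir st <> v
  | UGate v => GateStatus st <> v
  end.

Definition enabled (p : Params) {Tr} (A : Agent) (st : State Tr) (ct : R) : Prop :=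
  consistent (updates p A st ct) /\
  exists u, updates p A st ct u /\ changes st u.

(** A run is given by rho : R -> State Tr, rho t being the CT-free reduct of
    R(t) (in R(t), CT = t).  Only t >= 0 matters. *)
Definition Traj (Tr : Type) := R -> State Tr.

Definition pre_run {Tr} (rho : Traj Tr) : Prop :=
  forall tau, 0 < tau ->
  exists (n : nat) (q : nat -> R),
    q 0%nat = 0 /\ q n = tau /\
    (forall i, (i < n)%nat -> q i < q (S i)) /\
    (forall i, (i < n)%nat -> forall u v,
        q i < u < q (S i) -> q i < v < q (S i) -> rho u = rho v).

Definition right_val {X} (e : R -> X) (t : R) (a : X) : Prop :=
  exists eps, 0 < eps /\ forall u, t < u < t + eps -> e u = a.

Definition left_val {X} (e : R -> X) (t : R) (a : X) : Prop :=
  exists eps, 0 < eps /\ eps <= t /\ forall u, t - eps < u < t -> e u = a.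

Definition holds_over (P : R -> Prop) (a b : R) : Prop :=
  forall u, a < u < b -> P u.

Definition significant {X} (e : R -> X) (t : R) : Prop :=
  0 <= t /\
  forall eps, 0 < eps -> exists a, 0 <= a /\ Rabs (a - t) < eps /\ e a <> e t.

Definition fires (p : Params) {Tr} (rho : Traj Tr) (A : Agent) (t : R) : Prop :=
  exists s, right_val rho t s /\ s <> rho t /\
  exists M : Agent -> Prop, M A /\ exec p M (rho t) t s.

Definition run (p : Params) {Tr} (rho : Traj Tr) : Prop :=
  pre_run rho /\
  (forall t s, 0 <= t -> right_val rho t s -> s <> rho t ->
     (exists M : Agent -> Prop, exec p M (rho t) t s) /\
     TrackStatus s = TrackStatus (rho t)) /\
  (forall t s, 0 < t -> left_val rho t s -> s <> rho t ->
     Deadline s = Deadline (rho t) /\ Dir s = Dir (rho t) /\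
     GateStatus s = GateStatus (rho t)).

Definition immediate (p : Params) {Tr} (rho : Traj Tr) (A : Agent) : Prop :=
  forall t, 0 <= t -> enabled p A (rho t) t -> fires p rho A t.

Definition bounded (p : Params) {Tr} (rho : Traj Tr) (A : Agent) : Prop :=
  immediate p rho A \/
  exists b, 0 < b /\
    ~ exists t, 0 <= t /\
        holds_over (fun u => enabled p A (rho u) u) t (t + b) /\
        holds_over (fun u => ~ fires p rho A u) t (t + b).

Definition initial {Tr} (st : State Tr) : Prop :=
  forall x, TrackStatus st x = empty /\ Deadline st x = Inf.

Definition TS_over {Tr} (rho : Traj Tr) (x : Tr) (v : TStatus) (a b : R) : Prop :=
  forall u, a <= u < b -> TrackStatus (rho u) x = v.

Definition train_cycle (p : Params) {Tr} (rho : Traj Tr) (x : Tr)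
  (q : nat -> R) (i : nat) : Prop :=
  TS_over rho x empty (q (3 * i)%nat) (q (3 * i + 1)%nat) /\
  TS_over rho x coming (q (3 * i + 1)%nat) (q (3 * i + 2)%nat) /\
  d_min p <= q (3 * i + 2)%nat - q (3 * i + 1)%nat <= d_max p /\
  TS_over rho x incrossing (q (3 * i + 2)%nat) (q (3 * i + 3)%nat).

Definition train_motion (p : Params) {Tr} (rho : Traj Tr) : Prop :=
  forall x : Tr,
    (exists q : nat -> R, q 0%nat = 0 /\ (forall i, q i < q (S i)) /\
       forall i, train_cycle p rho x q i) \/
    (exists (q : nat -> R) (m : nat), q 0%nat = 0 /\
       (forall i, (i < 3 * m)%nat -> q i < q (S i)) /\
       (forall i, (i < m)%nat -> train_cycle p rho x q i) /\
       (forall u, q (3 * m)%nat <= u -> TrackStatus (rho u) x = empty)).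

Definition regular_run (p : Params) {Tr} (rho : Traj Tr) : Prop :=
  run p rho /\ initial (rho 0) /\
  train_motion p rho /\
  immediate p rho Controller /\
  bounded p rho Gate /\
  (~ exists t, 0 <= t /\
      holds_over (fun u => Dir (rho u) = close /\ GateStatus (rho u) = opened)
        t (t + d_close p)) /\
  (~ exists t, 0 <= t /\
      holds_over (fun u => Dir (rho u) = open /\ GateStatus (rho u) = closed)
        t (t + d_open p)).

Definition DirOf {Tr} (rho : Traj Tr) : R -> DirT := fun t => Dir (rho t).
Definition GateOf {Tr} (rho : Traj Tr) : R -> GStatus := fun t => GateStatus (rho t).

Definition pos_sig {X} (e : R -> X) (t : R) : Prop := 0 < t /\ significant e t.

(* A finite deadline d of a track means the track is coming throughout [d - W, d + d_close):
   the immediate controller sets a deadline the moment a track starts coming, and the train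
   needs at least d_min = W + d_close to arrive.  So when Dir switches to close at g (because
   some deadline equals g), SafeToOpen fails until g + d_close; when it switches to open at g,
   all deadlines are at least g + d_open (new ones are set W >= d_open ahead).  Thus Dir keeps
   each new value for at least d_close, resp. d_open.  Meanwhile the gate can only move towards
   the value Dir indicates, and by the gate timing constraints it gets there within that delay;
   as it agreed with Dir at the previous switch, GateStatus changes exactly once between two
   consecutive changes of Dir. *)

From Stdlib Require Import Reals Lra Lia List Classical IndefiniteDescription.
Open Scope R_scope.

Lemma right_induction (a b : R) (P : R -> Prop) :
  (exists e, 0 < e /\ forall u, a < u < a + e -> P u) ->
  (forall t, a < t < b -> P t -> exists e, 0 < e /\ forall u, t < u < t + e -> P u) ->
  (forall t, a < t < b -> (exists e, 0 < e /\ forall u, t - e < u < t -> P u) -> P t) ->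
  forall t, a < t < b -> P t.
Proof.
  intros [e0 [He0 Hstart]] Hright Hleft t0 Ht0.
  apply NNPP; intro HnP.
  (* c := sup of the x <= t0 with P on (a, x); the left condition gives P c, the right one c = t0. *)
  set (S := fun x => a < x <= t0 /\ forall u, a < u < x -> P u).
  assert (HS : S (Rmin (a + e0) t0)).
  { split.
    - split; [apply Rmin_glb_lt; lra | apply Rmin_r].
    - intros u Hu. apply Hstart. pose proof (Rmin_l (a + e0) t0); lra. }
  assert (Hbound : bound S) by (exists t0; intros x [Hx _]; lra).
  destruct (completeness S Hbound (ex_intro _ _ HS)) as [c [Hub Hlub]].
  assert (Hac : a < c) by (pose proof (Hub _ HS); destruct HS as [[? ?] _]; lra).
  assert (Hct0 : c <= t0) by (apply Hlub; intros x [Hx _]; lra).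
  assert (Hbelow : forall u, a < u < c -> P u).
  { intros u Hu. apply NNPP; intro HnPu.
    enough (c <= u) by lra.
    apply Hlub. intros x [Hx HPx].
    destruct (Rle_dec x u) as [|Hxu]; [assumption|].
    exfalso; apply HnPu, HPx; lra. }
  assert (HPc : P c).
  { apply Hleft; [lra|]. exists (c - a). split; [lra|]. intros u Hu; apply Hbelow; lra. }
  destruct (Req_dec c t0) as [<-|Hne]; [contradiction|].
  destruct (Hright c ltac:(lra) HPc) as [e1 [He1 Habove]].
  assert (HSc : S (Rmin (c + e1) t0)).
  { split.
    - split; [apply Rmin_glb_lt; lra | apply Rmin_r].
    - intros u Hu. destruct (Rtotal_order u c) as [Hlt|[->|Hgt]].
      + apply Hbelow; lra.
      + exact HPc.
      + apply Habove. pose proof (Rmin_l (c + e1) t0); lra. }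
  pose proof (Hub _ HSc). assert (c < Rmin (c + e1) t0) by (apply Rmin_glb_lt; lra). lra.
Qed.

Lemma right_induction_from (a b : R) (P : R -> Prop) :
  P a ->
  (forall t, a <= t < b -> P t -> exists e, 0 < e /\ forall u, t < u < t + e -> P u) ->
  (forall t, a < t < b -> (exists e, 0 < e /\ forall u, t - e < u < t -> P u) -> P t) ->
  forall t, a <= t < b -> P t.
Proof.
  intros Ha Hright Hleft t Ht.
  destruct (Req_dec t a) as [->|Hne]; [exact Ha|].
  apply (right_induction a b); [apply Hright; auto; lra | | exact Hleft | lra].
  intros; apply Hright; auto; lra.
Qed.

Lemma exists_between_not_In (L : list R) a b :
  a < b -> exists u, a < u < b /\ ~ In u L.
Proof.
  revert a b; induction L as [|x L IH]; intros a b Hab.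
  - exists ((a + b) / 2). split; [lra | auto].
  - destruct (Rlt_dec a x) as [Hax|Hax].
    + destruct (IH a (Rmin b x)) as [u [Hu Hn]]; [apply Rmin_glb_lt; lra|].
      pose proof (Rmin_l b x). pose proof (Rmin_r b x).
      exists u. split; [lra|]. intros [->|]; [lra | auto].
    + destruct (IH a b Hab) as [u [Hu Hn]].
      exists u. split; [exact Hu|]. intros [->|]; [lra | auto].
Qed.

Section Partition.

Variables (q : nat -> R) (n : nat).
Hypothesis q_incr : forall i, (i < n)%nat -> q i < q (S i).

Lemma partition_piece t : q 0%nat <= t < q n -> exists i, (i < n)%nat /\ q i <= t < q (S i).
Proof.
  induction n as [|m IH]; intros Ht; [lra|].
  destruct (Rlt_dec t (q m)) as [Hlt|Hge].
  - destruct IH as [i [Hi Hit]]; [intros i Hi; apply q_incr; lia | lra |].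
    exists i; split; [lia | exact Hit].
  - exists m. split; [lia | lra].
Qed.

Lemma partition_piece_left t : q 0%nat < t <= q n -> exists i, (i < n)%nat /\ q i < t <= q (S i).
Proof.
  induction n as [|m IH]; intros Ht; [lra|].
  destruct (Rle_dec t (q m)) as [Hle|Hgt].
  - destruct IH as [i [Hi Hit]]; [intros i Hi; apply q_incr; lia | lra |].
    exists i; split; [lia | exact Hit].
  - exists m. split; [lia | lra].
Qed.

Lemma partition_nonneg : q 0%nat = 0 -> forall i, (i <= n)%nat -> 0 <= q i.
Proof.
  intros Hq0 i. induction i as [|i IH]; intros Hi; [lra|].
  pose proof (q_incr i ltac:(lia)). pose proof (IH ltac:(lia)). lra.
Qed.

End Partition.

Lemma right_val_unique {X} (e : R -> X) t a b : right_val e t a -> right_val e t b -> a = b.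
Proof.
  intros [e1 [He1 H1]] [e2 [He2 H2]].
  assert (0 < Rmin e1 e2) by (apply Rmin_glb_lt; auto).
  pose proof (Rmin_l e1 e2). pose proof (Rmin_r e1 e2).
  rewrite <- (H1 (t + Rmin e1 e2 / 2)), <- (H2 (t + Rmin e1 e2 / 2)); auto; lra.
Qed.

Lemma right_val_const {X} (e : R -> X) c d a :
  (forall u, c < u < d -> e u = a) -> forall t, c <= t < d -> right_val e t a.
Proof. intros He t Ht. exists (d - t). split; [lra|]. intros u Hu; apply He; lra. Qed.

Definition gate_target (v : DirT) : GStatus :=
  match v with open => opened | close => closed end.

Lemma gate_target_inj v w : gate_target v = gate_target w -> v = w.
Proof. destruct v, w; simpl; congruence. Qed.

Lemma updates_Dir_inv {p : Params} {Tr} {A : Agent} {st : State Tr} {ct : R} {v : DirT} :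
  updates p A st ct (UDir v) ->
  A = Controller /\ ((v = close /\ exists x, Deadline st x = Fin ct) \/
                     (v = open /\ Dir st = close /\ SafeToOpen p st ct)).
Proof.
  destruct A; simpl.
  - intros [[_ E]|[_ E]]; discriminate.
  - intros [[x (_&_&E)]|[[x [Hx E]]|[[x (_&_&E)]|(Hc&Hsafe&E)]]];
      try discriminate; injection E as ->; eauto.
Qed.

Lemma updates_Gate_inv {p : Params} {Tr} {A : Agent} {st : State Tr} {ct : R} {v : GStatus} :
  updates p A st ct (UGate v) -> A = Gate /\ v = gate_target (Dir st).
Proof.
  destruct A; simpl.
  - intros [[HD E]|[HD E]]; injection E as ->; rewrite HD; auto.
  - intros [[x (_&_&E)]|[[x [_ E]]|[[x (_&_&E)]|(_&_&E)]]]; discriminate.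
Qed.

Lemma updates_Deadline_inv {p : Params} {Tr} {A : Agent} {st : State Tr} {ct : R} {x : Tr} {v : ER} :
  updates p A st ct (UDeadline x v) ->
  A = Controller /\
  ((TrackStatus st x = coming /\ Deadline st x = Inf /\ v = Fin (ct + W p)) \/
   (TrackStatus st x = empty /\ ERlt (Deadline st x) Inf /\ v = Inf)).
Proof.
  destruct A; simpl.
  - intros [[_ E]|[_ E]]; discriminate.
  - intros [[y (H1&H2&E)]|[[y [_ E]]|[[y (H1&H2&E)]|(_&_&E)]]];
      try discriminate; injection E as -> ->; auto.
Qed.

Lemma controller_updates_consistent {p : Params} {Tr} (st : State Tr) ct :
  (forall x, Deadline st x <> Fin ct) -> consistent (updates p Controller st ct).
Proof.
  intros Hnot. split; [|split].
  - intros x v1 v2 H1 H2.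
    destruct (updates_Deadline_inv H1) as [_ [(A1 & A2 & ->)|(A1 & A2 & ->)]];
    destruct (updates_Deadline_inv H2) as [_ [(B1 & B2 & ->)|(B1 & B2 & ->)]]; congruence.
  - intros v1 v2 H1 H2.
    destruct (updates_Dir_inv H1) as [_ [[_ [x Hx]]|[-> _]]]; [exfalso; exact (Hnot x Hx)|].
    destruct (updates_Dir_inv H2) as [_ [[_ [x Hx]]|[-> _]]];
      [exfalso; exact (Hnot x Hx) | reflexivity].
  - intros v1 v2 H1. destruct (updates_Gate_inv H1); discriminate.
Qed.

Definition finite_deadlines {Tr} (l : list Tr) (st : State Tr) : list R :=
  flat_map (fun x => match Deadline st x with Fin r => r :: nil | Inf => nil end) l.

Lemma In_finite_deadlines {Tr} (l : list Tr) st x r :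
  In x l -> Deadline st x = Fin r -> In r (finite_deadlines l st).
Proof.
  intros Hx Hd. apply in_flat_map. exists x. rewrite Hd. split; [exact Hx | left; reflexivity].
Qed.

Definition deadlines_from {Tr} (st : State Tr) (b : R) : Prop :=
  forall y d, Deadline st y = Fin d -> b <= d.

Definition module_updates (p : Params) {Tr} (M : Agent -> Prop) (st : State Tr) (ct : R)
  (u : Update Tr) : Prop :=
  exists A, M A /\ updates p A st ct u.

Definition left_continuous {Tr X} (rho : Traj Tr) (F : State Tr -> X) : Prop :=
  forall t s, 0 < t -> left_val rho t s -> F (rho t) = F s.

Definition jumps_at {Tr X} (rho : Traj Tr) (F : State Tr -> X) (t : R) : Prop :=
  exists s, right_val rho t s /\ F s <> F (rho t).

Section Run.

Variables (p : Params) (Tr : Type) (rho : Traj Tr).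
Hypothesis run_rho : run p rho.

Lemma right_val_exists t : 0 <= t -> exists s, right_val rho t s.
Proof.
  intros Ht. destruct run_rho as [Hpre _].
  destruct (Hpre (t + 1)) as [n [q (Hq0 & Hqn & Hincr & Hconst)]]; [lra|].
  destruct (partition_piece q n Hincr t) as [i [Hi Hit]]; [lra|].
  exists (rho ((t + q (S i)) / 2)), (q (S i) - t). split; [lra|].
  intros u Hu. apply (Hconst i Hi); lra.
Qed.

Lemma left_val_exists t : 0 < t -> exists s, left_val rho t s.
Proof.
  intros Ht. destruct run_rho as [Hpre _].
  destruct (Hpre t Ht) as [n [q (Hq0 & Hqn & Hincr & Hconst)]].
  destruct (partition_piece_left q n Hincr t) as [i [Hi Hit]]; [lra|].
  pose proof (partition_nonneg q n Hincr Hq0 i ltac:(lia)).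
  exists (rho ((q i + t) / 2)), (t - q i). split; [lra|]. split; [lra|].
  intros u Hu. apply (Hconst i Hi); lra.
Qed.

Lemma internal_left_continuous t s : 0 < t -> left_val rho t s ->
  Deadline (rho t) = Deadline s /\ Dir (rho t) = Dir s /\ GateStatus (rho t) = GateStatus s.
Proof.
  intros Ht Hs. destruct run_rho as (_ & _ & Hleft).
  destruct (classic (s = rho t)) as [->|Hne]; [auto|].
  destruct (Hleft t s Ht Hs Hne) as (E1 & E2 & E3); auto.
Qed.

Lemma Deadline_left_continuous : left_continuous rho (@Deadline Tr).
Proof. intros t s Ht Hs. apply (internal_left_continuous t s Ht Hs). Qed.

Lemma Dir_left_continuous : left_continuous rho (@Dir Tr).
Proof. intros t s Ht Hs. apply (internal_left_continuous t s Ht Hs). Qed.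

Lemma GateStatus_left_continuous : left_continuous rho (@GateStatus Tr).
Proof. intros t s Ht Hs. apply (internal_left_continuous t s Ht Hs). Qed.

Lemma left_pick (P : R -> Prop) t : 0 < t ->
  (exists e, 0 < e /\ forall u, t - e < u < t -> P u) ->
  exists u, 0 < u < t /\ P u /\
    forall X (F : State Tr -> X), left_continuous rho F -> F (rho t) = F (rho u).
Proof.
  intros Ht [e [He HP]].
  destruct (left_val_exists t Ht) as [s Hs].
  pose proof Hs as [e' [He' [He't Hconst]]].
  assert (0 < Rmin e e') by (apply Rmin_glb_lt; auto).
  pose proof (Rmin_l e e'). pose proof (Rmin_r e e').
  assert (Hu : rho (t - Rmin e e' / 2) = s) by (apply Hconst; lra).
  exists (t - Rmin e e' / 2). split; [lra|]. split; [apply HP; lra|].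
  intros X F HF. rewrite Hu. exact (HF t s Ht Hs).
Qed.

Lemma left_continuous_endpoint {X} (F : State Tr -> X) c a b :
  left_continuous rho F -> 0 <= a < b -> (forall u, a < u < b -> F (rho u) = c) -> F (rho b) = c.
Proof.
  intros HF Hab Hc.
  destruct (left_pick (fun u => a < u < b) b) as [u (_ & Hu & EF)];
    [lra | exists (b - a); split; [lra | intros; lra] |].
  rewrite (EF _ F HF). exact (Hc u Hu).
Qed.

Lemma run_step t s : 0 <= t -> right_val rho t s ->
  s = rho t \/ exists M, consistent (module_updates p M (rho t) t) /\
                          applied (module_updates p M (rho t) t) (rho t) s.
Proof.
  intros Ht Hs. destruct run_rho as (_ & Hright & _).
  destruct (classic (s = rho t)) as [->|Hne]; [auto|].
  destruct (Hright t s Ht Hs Hne) as [[M [[Hc Ha]|[_ E]]] _]; [eauto | congruence].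
Qed.

Lemma run_step_Dir t s : 0 <= t -> right_val rho t s ->
  Dir s = Dir (rho t) \/ exists A, updates p A (rho t) t (UDir (Dir s)).
Proof.
  intros Ht Hs. destruct (run_step t s Ht Hs) as [->|[M [_ (_ & _ & [HU Hnone] & _)]]]; [auto|].
  destruct (classic (exists v, module_updates p M (rho t) t (UDir v))) as [[v Hv]|Hn].
  - right. rewrite (HU v Hv). destruct Hv as [A [_ HA]]. eauto.
  - left. apply Hnone. intros v Hv; eauto.
Qed.

Lemma run_step_Gate t s : 0 <= t -> right_val rho t s ->
  GateStatus s = GateStatus (rho t) \/ GateStatus s = gate_target (Dir (rho t)).
Proof.
  intros Ht Hs. destruct (run_step t s Ht Hs) as [->|[M [_ (_ & _ & _ & [HU Hnone])]]]; [auto|].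
  destruct (classic (exists v, module_updates p M (rho t) t (UGate v))) as [[v Hv]|Hn].
  - right. rewrite (HU v Hv). destruct Hv as [A [_ HA]]. apply (updates_Gate_inv HA).
  - left. apply Hnone. intros v Hv; eauto.
Qed.

Lemma run_step_Deadline t s y : 0 <= t -> right_val rho t s ->
  Deadline s y = Deadline (rho t) y \/ exists A, updates p A (rho t) t (UDeadline y (Deadline s y)).
Proof.
  intros Ht Hs. destruct (run_step t s Ht Hs) as [->|[M [_ (_ & HD & _ & _)]]]; [auto|].
  destruct (HD y) as [HU Hnone].
  destruct (classic (exists v, module_updates p M (rho t) t (UDeadline y v))) as [[v Hv]|Hn].
  - right. rewrite (HU v Hv). destruct Hv as [A [_ HA]]. eauto.
  - left. apply Hnone. intros v Hv; eauto.
Qed.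

Lemma significant_iff_jumps_at {X} (F : State Tr -> X) t : left_continuous rho F -> 0 < t ->
  significant (fun u => F (rho u)) t <-> jumps_at rho F t.
Proof.
  intros HF Ht. split.
  - intros [_ Hsig]. apply NNPP; intro Hn.
    destruct (right_val_exists t ltac:(lra)) as [s Hs].
    assert (HsF : F s = F (rho t)) by (apply NNPP; intro; apply Hn; exists s; auto).
    destruct (left_val_exists t Ht) as [s' Hs'].
    pose proof (HF t s' Ht Hs') as Hs'F.
    destruct Hs' as [e' [He' [_ Hleft]]]. destruct Hs as [e [He Hright]].
    assert (Hm : 0 < Rmin e e') by (apply Rmin_glb_lt; auto).
    pose proof (Rmin_l e e'). pose proof (Rmin_r e e').
    destruct (Hsig _ Hm) as [a [_ [Hat Hne]]]. apply Rabs_def2 in Hat.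
    apply Hne. destruct (Rtotal_order a t) as [Hlt|[->|Hgt]]; [| reflexivity |].
    + rewrite (Hleft a) by lra. congruence.
    + rewrite (Hright a) by lra. congruence.
  - intros [s [[e [He Hright]] Hne]]. split; [lra|]. intros eps Heps.
    assert (0 < Rmin e eps) by (apply Rmin_glb_lt; auto).
    pose proof (Rmin_l e eps). pose proof (Rmin_r e eps).
    exists (t + Rmin e eps / 2). split; [lra|]. split.
    + rewrite Rabs_right; lra.
    + rewrite (Hright (t + Rmin e eps / 2)) by lra. exact Hne.
Qed.

Lemma constant_after_no_jumps {X} (F : State Tr -> X) a b s : left_continuous rho F ->
  0 <= a < b -> right_val rho a s -> (forall t, a < t < b -> ~ jumps_at rho F t) ->
  forall u, a < u <= b -> F (rho u) = F s.
Proof.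
  intros HF Hab Hs Hsteady.
  assert (Hin : forall u, a < u < b -> F (rho u) = F s).
  { apply right_induction.
    - destruct Hs as [e [He Hright]]. exists e. split; [exact He|].
      intros u Hu. rewrite (Hright u Hu). reflexivity.
    - intros t Ht HPt. destruct (right_val_exists t ltac:(lra)) as [s' Hs'].
      assert (Hs'F : F s' = F (rho t)) by (apply NNPP; intro; apply (Hsteady t Ht); exists s'; auto).
      destruct Hs' as [e [He Hright]]. exists e. split; [exact He|].
      intros u Hu. rewrite (Hright u Hu). congruence.
    - intros t Ht Hl. destruct (left_pick _ t ltac:(lra) Hl) as [u (_ & Hu & EF)].
      rewrite (EF _ F HF). exact Hu. }
  intros u [Hu1 Hu2]. destruct (Rle_lt_or_eq_dec u b Hu2) as [Hlt | ->]; [apply Hin; lra|].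
  exact (left_continuous_endpoint F (F s) a b HF Hab Hin).
Qed.

Lemma constant_from_no_jumps {X} (F : State Tr -> X) a b : left_continuous rho F ->
  0 <= a <= b -> (forall t, a <= t < b -> ~ jumps_at rho F t) ->
  forall u, a <= u <= b -> F (rho u) = F (rho a).
Proof.
  intros HF Hab Hsteady u Hu.
  destruct (Req_dec u a) as [->|Hne]; [reflexivity|].
  destruct (right_val_exists a ltac:(lra)) as [s Hs].
  rewrite (constant_after_no_jumps F a b s HF ltac:(lra) Hs) by (lra || (intros; apply Hsteady; lra)).
  apply NNPP; intro Hjump. apply (Hsteady a ltac:(lra)). exists s; auto.
Qed.

Section ControllerDiscipline.

Hypothesis tracks_finite : exists l : list Tr, forall x, In x l.
Hypothesis init_rho : initial (rho 0).
Hypothesis trains : train_motion p rho.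
Hypothesis controller_immediate : immediate p rho Controller.
Hypothesis d_close_pos : 0 < d_close p.
Hypothesis d_open_pos : 0 < d_open p.
Hypothesis d_close_lt_d_min : d_close p < d_min p.
Hypothesis d_open_le_W : d_open p <= W p.

Lemma right_val_coming_has_deadline t s y : 0 <= t -> right_val rho t s ->
  TrackStatus s y = coming -> Deadline s y <> Inf.
Proof.
  intros Ht Hs Hcoming Hinf.
  destruct tracks_finite as [l Hl].
  pose proof Hs as [e [He Hright]].
  (* Away from the finitely many deadlines of s the controller is enabled (SetDeadline y), so
     being immediate it would change the state, yet s persists. *)
  destruct (exists_between_not_In (finite_deadlines l s) t (t + e)) as [u [Hu Hnot]]; [lra|].
  assert (Hsu : rho u = s) by (apply Hright; lra).
  assert (Hen : enabled p Controller (rho u) u).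
  { rewrite Hsu. split.
    - apply controller_updates_consistent. intros x Hx. apply Hnot.
      exact (In_finite_deadlines l s x u (Hl x) Hx).
    - exists (UDeadline y (Fin (u + W p))). split.
      + left. exists y. auto.
      + simpl. rewrite Hinf. discriminate. }
  destruct (controller_immediate u ltac:(lra) Hen) as [s' [Hs' [Hne _]]].
  apply Hne. rewrite Hsu. apply (right_val_unique _ u s' s Hs').
  apply (right_val_const rho t (t + e)); [exact Hright | lra].
Qed.

Lemma train_cycle_coming y (q : nat -> R) k t :
  train_cycle p rho y q (k / 3) -> 0 <= q (3 * (k / 3) + 1)%nat -> q k <= t < q (S k) ->
  TrackStatus (rho t) y = coming ->
  exists t1 t2, 0 <= t1 /\ t1 <= t < t2 /\ t1 + d_min p <= t2 /\ TS_over rho y coming t1 t2.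
Proof.
  remember (k / 3)%nat as j eqn:Hj.
  intros (C1 & C2 & C3 & C4) Hq Ht Hy.
  pose proof (Nat.div_mod_eq k 3) as Hk. pose proof (Nat.mod_upper_bound k 3 ltac:(lia)).
  rewrite <- Hj in Hk.
  destruct (k mod 3)%nat as [|[|[|r]]]; [ | | | lia].
  - replace k with (3 * j)%nat in * by lia.
    rewrite C1 in Hy; [discriminate|]. replace (S (3 * j)) with (3 * j + 1)%nat in Ht by lia. lra.
  - replace k with (3 * j + 1)%nat in * by lia.
    replace (S (3 * j + 1)) with (3 * j + 2)%nat in Ht by lia.
    exists (q (3 * j + 1)%nat), (q (3 * j + 2)%nat). repeat split; auto; lra.
  - replace k with (3 * j + 2)%nat in * by lia.
    rewrite C4 in Hy; [discriminate|]. replace (S (3 * j + 2)) with (3 * j + 3)%nat in Ht by lia. lra.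
Qed.

Lemma coming_period y t : 0 <= t -> TrackStatus (rho t) y = coming ->
  exists t1 t2, 0 <= t1 /\ t1 <= t < t2 /\ t1 + d_min p <= t2 /\ TS_over rho y coming t1 t2.
Proof.
  intros Ht Hy.
  destruct (trains y) as [[q (Hq0 & Hincr & Hcycle)] | [q [m (Hq0 & Hincr & Hcycle & Hend)]]].
  - assert (Hmono : forall a b, (a <= b)%nat -> q a <= q b).
    { intros a b Hab. induction Hab; [lra|]. pose proof (Hincr m). lra. }
    (* each cycle lasts at least d_min, so some q (3 i) lies beyond t *)
    assert (Hgrow : forall i, INR i * d_min p <= q (3 * i)%nat).
    { induction i as [|i IH].
      - simpl. rewrite Hq0. lra.
      - rewrite S_INR. destruct (Hcycle i) as (_ & _ & [C3 _] & _).
        pose proof (Hmono (3 * i)%nat (3 * i + 1)%nat ltac:(lia)).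
        pose proof (Hmono (3 * i + 2)%nat (3 * S i)%nat ltac:(lia)). lra. }
    destruct (INR_archimed (d_min p) t ltac:(lra)) as [i Hi].
    pose proof (Hgrow i).
    destruct (partition_piece q (3 * i) (fun k _ => Hincr k) t) as [k [Hk Hkt]]; [lra|].
    apply (train_cycle_coming y q k t); auto.
    rewrite <- Hq0. apply Hmono. lia.
  - destruct (Rlt_dec t (q (3 * m)%nat)) as [Hlt|Hge]; [|rewrite Hend in Hy; [discriminate | lra]].
    destruct (partition_piece q (3 * m) Hincr t) as [k [Hk Hkt]]; [lra|].
    assert (Hkm : (k / 3 < m)%nat) by (apply Nat.Div0.div_lt_upper_bound; lia).
    apply (train_cycle_coming y q k t); auto.
    apply (partition_nonneg q (3 * m) Hincr Hq0); lia.
Qed.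

Lemma coming_without_deadline y t : 0 <= t ->
  TrackStatus (rho t) y = coming -> Deadline (rho t) y = Inf -> TS_over rho y coming t (t + d_min p).
Proof.
  intros Ht Hy Hinf.
  destruct (coming_period y t Ht Hy) as [t1 [t2 (Ht12 & Hlen & Hcoming)]].
  destruct (Req_dec t1 t) as [<-|Hne]; [intros u Hu; apply Hcoming; lra|].
  (* Otherwise y is already coming at the left value of t, which has no deadline for y either. *)
  exfalso. destruct (left_val_exists t ltac:(lra)) as [s Hs].
  destruct (internal_left_continuous t s ltac:(lra) Hs) as [Hdl _].
  destruct Hs as [e (He & Het & Hleft)].
  assert (Rmax (t - e) t1 < t) by (apply Rmax_lub_lt; lra).
  pose proof (Rmax_l (t - e) t1). pose proof (Rmax_r (t - e) t1).
  set (u := (Rmax (t - e) t1 + t) / 2).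
  assert (Hu : rho u = s) by (apply Hleft; unfold u; lra).
  apply (right_val_coming_has_deadline u s y).
  - unfold u; lra.
  - apply (right_val_const rho (t - e) t); [exact Hleft | unfold u; lra].
  - rewrite <- Hu. apply Hcoming. unfold u; lra.
  - rewrite <- Hdl. exact Hinf.
Qed.

Lemma deadline_coming t y d : 0 <= t -> Deadline (rho t) y = Fin d ->
  TS_over rho y coming (d - W p) (d + d_close p).
Proof.
  intros Ht.
  revert y d. apply (right_induction_from 0 (t + 1)
    (fun t => forall y d, Deadline (rho t) y = Fin d ->
                          TS_over rho y coming (d - W p) (d + d_close p)));
    [ | | | lra].
  - intros y d Hd. destruct (init_rho y) as [_ Hinf]. congruence.
  - intros t0 Ht0 IH. destruct (right_val_exists t0 ltac:(lra)) as [s Hs].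
    pose proof Hs as [e [He Hright]]. exists e. split; [exact He|].
    intros u Hu y d Hd. rewrite (Hright u Hu) in Hd.
    destruct (run_step_Deadline t0 s y ltac:(lra) Hs) as [Heq|[A HA]]; [apply IH; congruence|].
    (* a fresh deadline d = t0 + W is set exactly when y starts coming *)
    destruct (updates_Deadline_inv HA) as [_ [(Hy & Hinf & E)|(_ & _ & E)]]; [|congruence].
    rewrite Hd in E. injection E as ->.
    intros v Hv. apply (coming_without_deadline y t0); auto; [lra|]. unfold W in Hv. lra.
  - intros t0 Ht0 Hl. destruct (left_pick _ t0 ltac:(lra) Hl) as [u (_ & IH & EF)].
    intros y d Hd. apply (IH y d). rewrite <- (EF _ _ Deadline_left_continuous). exact Hd.
Qed.

Lemma dir_close_persists g s : 0 <= g -> right_val rho g s ->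
  Dir s = close -> Dir (rho g) = open -> forall u, g < u < g + d_close p -> Dir (rho u) = close.
Proof.
  intros Hg Hs Hclose Hopen.
  destruct (run_step_Dir g s Hg Hs) as [Heq|[A HA]]; [congruence|].
  rewrite Hclose in HA.
  destruct (updates_Dir_inv HA) as [_ [[_ [x Hx]]|[E _]]]; [|discriminate].
  (* the track x whose deadline g triggered the change stays coming up to g + d_close *)
  pose proof (deadline_coming g x g Hg Hx) as Hcoming.
  assert (Hkeep : forall t s', g <= t < g + d_close p -> right_val rho t s' ->
                    Deadline (rho t) x = Fin g -> Deadline s' x = Fin g).
  { intros t s' Ht Hs' Hdt.
    destruct (run_step_Deadline t s' x ltac:(lra) Hs') as [Heq|[A' HA']]; [congruence|].
    destruct (updates_Deadline_inv HA') as [_ [(Hy & Hinf & _)|(Hy & _ & _)]]; [congruence|].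
    rewrite (Hcoming t) in Hy; [discriminate | unfold W; lra]. }
  enough (H : forall t, g < t < g + d_close p -> Dir (rho t) = close /\ Deadline (rho t) x = Fin g)
    by (intros u Hu; apply H, Hu).
  apply right_induction.
  - pose proof Hs as [e [He Hright]]. exists e. split; [exact He|].
    intros u Hu. rewrite (Hright u Hu). split; [exact Hclose|].
    apply (Hkeep g); [lra | exact Hs | exact Hx].
  - intros t Ht [HDt Hdt]. destruct (right_val_exists t ltac:(lra)) as [s' Hs'].
    pose proof Hs' as [e [He Hright]]. exists e. split; [exact He|].
    intros u Hu. rewrite (Hright u Hu). split; [|apply (Hkeep t); auto; lra].
    destruct (run_step_Dir t s' ltac:(lra) Hs') as [Heq|[A' HA']]; [congruence|].
    destruct (updates_Dir_inv HA') as [_ [[-> _]|[_ [_ Hsafe]]]]; [reflexivity|].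
    exfalso. destruct (Hsafe x) as [Hempty|Hlt].
    + rewrite (Hcoming t) in Hempty; [discriminate | unfold W; lra].
    + rewrite Hdt in Hlt. simpl in Hlt. lra.
  - intros t Ht Hl. destruct (left_pick _ t ltac:(lra) Hl) as [u (_ & [HDu Hdu] & EF)].
    rewrite (EF _ _ Dir_left_continuous), (EF _ _ Deadline_left_continuous). auto.
Qed.

Lemma signal_open_deadlines g s : 0 <= g -> right_val rho g s ->
  Dir s = open -> Dir (rho g) = close -> deadlines_from s (g + d_open p).
Proof.
  intros Hg Hs Hopen Hclose.
  destruct (run_step g s Hg Hs) as [->|[M [_ (_ & HD & [HU Hnone] & _)]]]; [congruence|].
  (* the change of Dir is SignalOpen, so Controller fired and SafeToOpen held at g *)
  assert (HM : M Controller /\ SafeToOpen p (rho g) g).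
  { destruct (classic (exists v, module_updates p M (rho g) g (UDir v))) as [[v Hv]|Hn].
    - pose proof (HU v Hv) as Hv'. destruct Hv as [A [HMA HA]].
      destruct (updates_Dir_inv HA) as [-> [[-> _]|[_ [_ Hsafe]]]]; [congruence | auto].
    - rewrite Hnone in Hopen; [congruence|]. intros v Hv; apply Hn; eauto. }
  destruct HM as [HM Hsafe].
  intros y d Hd. destruct (HD y) as [HUy Hnoney].
  destruct (classic (exists v, module_updates p M (rho g) g (UDeadline y v))) as [[v Hv]|Hn].
  - rewrite (HUy v Hv) in Hd. destruct Hv as [A [_ HA]].
    destruct (updates_Deadline_inv HA) as [_ [(_ & _ & E)|(_ & _ & E)]];
      rewrite Hd in E; [|discriminate].
    injection E as ->. lra.
  - rewrite Hnoney in Hd by (intros v Hv; apply Hn; eauto).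
    destruct (Hsafe y) as [Hempty|Hlt].
    + exfalso. apply Hn. exists Inf, Controller. split; [exact HM|].
      right; right; left. exists y. rewrite Hd. simpl. auto.
    + rewrite Hd in Hlt. simpl in Hlt. lra.
Qed.

Lemma dir_open_persists g s : 0 <= g -> right_val rho g s ->
  Dir s = open -> Dir (rho g) = close -> forall u, g < u < g + d_open p -> Dir (rho u) = open.
Proof.
  intros Hg Hs Hopen Hclose.
  pose proof (signal_open_deadlines g s Hg Hs Hopen Hclose) as Hfrom.
  enough (H : forall t, g < t < g + d_open p ->
                      Dir (rho t) = open /\ deadlines_from (rho t) (g + d_open p))
    by (intros u Hu; apply H, Hu).
  apply right_induction.
  - pose proof Hs as [e [He Hright]]. exists e. split; [exact He|].
    intros u Hu. rewrite (Hright u Hu). auto.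
  - intros t Ht [HDt Hfromt]. destruct (right_val_exists t ltac:(lra)) as [s' Hs'].
    pose proof Hs' as [e [He Hright]]. exists e. split; [exact He|].
    intros u Hu. rewrite (Hright u Hu). split.
    + destruct (run_step_Dir t s' ltac:(lra) Hs') as [Heq|[A HA]]; [congruence|].
      destruct (updates_Dir_inv HA) as [_ [[_ [x Hx]]|[-> _]]]; [|reflexivity].
      specialize (Hfromt x t Hx). lra.
    + intros y d Hd. destruct (run_step_Deadline t s' y ltac:(lra) Hs') as [Heq|[A HA]].
      * rewrite Heq in Hd. exact (Hfromt y d Hd).
      * destruct (updates_Deadline_inv HA) as [_ [(_ & _ & E)|(_ & _ & E)]]; rewrite Hd in E;
          [|discriminate].
        injection E as ->. lra.
  - intros t Ht Hl. destruct (left_pick _ t ltac:(lra) Hl) as [u (_ & [HDu Hfromu] & EF)].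
    unfold deadlines_from.
    rewrite (EF _ _ Dir_left_continuous), (EF _ _ Deadline_left_continuous). auto.
Qed.

Definition dir_delay (v : DirT) : R := match v with open => d_open p | close => d_close p end.

Lemma dir_change_persists g s : 0 <= g -> right_val rho g s -> Dir s <> Dir (rho g) ->
  forall u, g < u < g + dir_delay (Dir s) -> Dir (rho u) = Dir s.
Proof.
  intros Hg Hs Hne.
  destruct (Dir s) eqn:Es, (Dir (rho g)) eqn:Eg; try congruence; simpl.
  - apply (dir_open_persists g s); auto.
  - apply (dir_close_persists g s); auto.
Qed.

Section GateTiming.

Hypothesis gate_close_timing : ~ exists t, 0 <= t /\
  holds_over (fun u => Dir (rho u) = close /\ GateStatus (rho u) = opened) t (t + d_close p).
Hypothesis gate_open_timing : ~ exists t, 0 <= t /\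
  holds_over (fun u => Dir (rho u) = open /\ GateStatus (rho u) = closed) t (t + d_open p).

Lemma gate_follows_dir a b s v : 0 <= a < b -> right_val rho a s ->
  GateStatus s = gate_target v -> (forall u, a < u < b -> Dir (rho u) = v) ->
  (forall u, a < u <= b -> GateStatus (rho u) = gate_target v) /\
  (forall t, a < t < b -> ~ jumps_at rho (@GateStatus Tr) t).
Proof.
  intros Hab Hs Hgate HDir.
  assert (Hin : forall u, a < u < b -> GateStatus (rho u) = gate_target v).
  { apply right_induction.
    - destruct Hs as [e [He Hright]]. exists e. split; [exact He|].
      intros u Hu. rewrite (Hright u Hu). exact Hgate.
    - intros t Ht Hgt. destruct (right_val_exists t ltac:(lra)) as [s' Hs'].
      pose proof (run_step_Gate t s' ltac:(lra) Hs') as Hstep.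
      destruct Hs' as [e [He Hright]]. exists e. split; [exact He|].
      rewrite (HDir t Ht) in Hstep.
      intros u Hu. rewrite (Hright u Hu). destruct Hstep; congruence.
    - intros t Ht Hl. destruct (left_pick _ t ltac:(lra) Hl) as [u (_ & Hgu & EF)].
      rewrite (EF _ _ GateStatus_left_continuous). exact Hgu. }
  split.
  - intros u [Hau Hub]. destruct (Rle_lt_or_eq_dec u b Hub) as [Hlt | ->]; [apply Hin; lra|].
    exact (left_continuous_endpoint (@GateStatus Tr) _ a b GateStatus_left_continuous Hab Hin).
  - intros t Ht [s' [Hs' Hne]]. apply Hne.
    destruct (run_step_Gate t s' ltac:(lra) Hs') as [E | ->]; [exact E|].
    rewrite HDir, Hin; auto.
Qed.

Lemma gate_no_jump_after_jump a b v t : 0 <= a -> (forall u, a < u <= b -> Dir (rho u) = v) ->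
  a < t < b -> jumps_at rho (@GateStatus Tr) t ->
  (forall u, t < u <= b -> GateStatus (rho u) = gate_target v) /\
  (forall t', t < t' < b -> ~ jumps_at rho (@GateStatus Tr) t').
Proof.
  intros Ha HDir Ht [s [Hs Hne]].
  destruct (run_step_Gate t s ltac:(lra) Hs) as [E | Hgate]; [congruence|].
  rewrite HDir in Hgate by lra.
  apply (gate_follows_dir t b s v); auto; [lra|].
  intros u Hu; apply HDir; lra.
Qed.

Lemma gate_reaches_target a v : 0 <= a -> (forall u, a < u < a + dir_delay v -> Dir (rho u) = v) ->
  exists u, a < u < a + dir_delay v /\ GateStatus (rho u) = gate_target v.
Proof.
  intros Ha HDir. apply NNPP; intro Hnever.
  destruct v; simpl in *; [apply gate_open_timing | apply gate_close_timing];
    exists a; split; auto; intros u Hu; split; auto;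
    destruct (GateStatus (rho u)) eqn:E; auto; exfalso; apply Hnever; eauto.
Qed.

Lemma gate_single_jump a b v : 0 <= a -> a + dir_delay v <= b ->
  (forall u, a < u <= b -> Dir (rho u) = v) -> Dir (rho a) <> v ->
  GateStatus (rho a) = gate_target (Dir (rho a)) ->
  (exists t, a < t < b /\ jumps_at rho (@GateStatus Tr) t) /\
  (forall t1 t2, a <= t1 < b -> a <= t2 < b ->
     jumps_at rho (@GateStatus Tr) t1 -> jumps_at rho (@GateStatus Tr) t2 -> t1 = t2) /\
  GateStatus (rho b) = gate_target v.
Proof.
  intros Ha Hb HDir HDa Hga.
  assert (Hdelay : 0 < dir_delay v) by (destruct v; simpl; lra).
  assert (Hnot_a : ~ jumps_at rho (@GateStatus Tr) a).
  { intros [s [Hs Hne]]. destruct (run_step_Gate a s Ha Hs); congruence. }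
  assert (Hjump : exists t, a < t < b /\ jumps_at rho (@GateStatus Tr) t).
  { destruct (gate_reaches_target a v Ha) as [u [Hu Hgu]]; [intros; apply HDir; lra|].
    destruct (classic (exists t, a <= t < u /\ jumps_at rho (@GateStatus Tr) t)) as [[t [Ht Hj]]|Hn].
    - exists t. split; [|exact Hj]. destruct (Req_dec t a) as [->|]; [contradiction | lra].
    - exfalso. apply HDa, gate_target_inj. rewrite <- Hga, <- Hgu.
      symmetry. apply (constant_from_no_jumps _ a u GateStatus_left_continuous); [lra | | lra].
      intros t Ht Hj. apply Hn. eauto. }
  split; [exact Hjump|]. split.
  - intros t1 t2 Ht1 Ht2 Hj1 Hj2.
    assert (t1 <> a) by (intros ->; contradiction).
    assert (t2 <> a) by (intros ->; contradiction).
    destruct (Rtotal_order t1 t2) as [Hlt|[Heq|Hgt]]; [exfalso | exact Heq | exfalso].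
    + apply (proj2 (gate_no_jump_after_jump a b v t1 Ha HDir ltac:(lra) Hj1) t2); [lra | exact Hj2].
    + apply (proj2 (gate_no_jump_after_jump a b v t2 Ha HDir ltac:(lra) Hj2) t1); [lra | exact Hj1].
  - destruct Hjump as [t [Ht Hj]].
    apply (proj1 (gate_no_jump_after_jump a b v t Ha HDir Ht Hj)). lra.
Qed.

Section DirMoments.

Variables (idx : nat -> Prop) (gamma : nat -> R).
Hypothesis dir_at_0 : Dir (rho 0) = open.
Hypothesis gate_at_0 : GateStatus (rho 0) = opened.
Hypothesis idx_pred : forall i, idx (S i) -> idx i.
Hypothesis gamma_incr : forall i, idx (S i) -> gamma i < gamma (S i).
Hypothesis gamma_dir_moments : forall t, pos_sig (DirOf rho) t <-> exists i, idx i /\ gamma i = t.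

Lemma dir_jumps_iff t : 0 < t -> jumps_at rho (@Dir Tr) t <-> exists i, idx i /\ gamma i = t.
Proof.
  intros Ht. rewrite <- (significant_iff_jumps_at _ t Dir_left_continuous Ht), <- gamma_dir_moments.
  unfold pos_sig, DirOf. tauto.
Qed.

Lemma gamma_pos i : idx i -> 0 < gamma i.
Proof. intros Hi. apply (gamma_dir_moments (gamma i)). eauto. Qed.

Lemma idx_le j k : (j <= k)%nat -> idx k -> idx j.
Proof. induction 1; auto. Qed.

Lemma gamma_lt j k : (j < k)%nat -> idx k -> gamma j < gamma k.
Proof.
  induction 1 as [|k Hjk IH]; intros Hk; [auto|].
  pose proof (gamma_incr k Hk). pose proof (IH (idx_pred k Hk)). lra.
Qed.

Lemma dir_no_jump_between i t : idx i -> gamma i < t -> (idx (S i) -> t < gamma (S i)) ->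
  ~ jumps_at rho (@Dir Tr) t.
Proof.
  intros Hi Ht HtS Hjump. pose proof (gamma_pos i Hi).
  destruct (proj1 (dir_jumps_iff t ltac:(lra)) Hjump) as [j [Hj <-]].
  destruct (Compare_dec.lt_eq_lt_dec j i) as [[Hji | ->] | Hij]; [ | lra | ].
  - pose proof (gamma_lt j i Hji Hi). lra.
  - assert (HSi : idx (S i)) by exact (idx_le (S i) j Hij Hj).
    specialize (HtS HSi). destruct (Nat.eq_dec j (S i)) as [-> | Hne]; [lra|].
    pose proof (gamma_lt (S i) j ltac:(lia) Hj). lra.
Qed.

Lemma dir_no_jump_before t : 0 <= t -> (idx 0%nat -> t < gamma 0%nat) -> ~ jumps_at rho (@Dir Tr) t.
Proof.
  intros Ht Hfirst [s [Hs Hne]].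
  destruct (Req_dec t 0) as [-> | Hne0].
  - destruct (run_step_Dir 0 s Ht Hs) as [E | [A HA]]; [congruence|].
    destruct (updates_Dir_inv HA) as [_ [[_ [x Hx]] | [_ [Hclose _]]]]; [|congruence].
    destruct (init_rho x) as [_ Hinf]. congruence.
  - destruct (proj1 (dir_jumps_iff t ltac:(lra)) (ex_intro _ s (conj Hs Hne))) as [j [Hj <-]].
    specialize (Hfirst (idx_le 0 j ltac:(lia) Hj)).
    destruct j as [|j]; [lra|]. pose proof (gamma_lt 0 (S j) ltac:(lia) Hj). lra.
Qed.

Lemma dir_on_piece i s : idx i -> right_val rho (gamma i) s ->
  forall u, gamma i < u -> (idx (S i) -> u <= gamma (S i)) -> Dir (rho u) = Dir s.
Proof.
  intros Hi Hs u Hu HuS. pose proof (gamma_pos i Hi).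
  apply (constant_after_no_jumps _ (gamma i) u s Dir_left_continuous); [lra | exact Hs | | lra].
  intros t Ht. apply (dir_no_jump_between i t Hi); [lra|]. intros HS. specialize (HuS HS). lra.
Qed.

Lemma dir_jumps_at_gamma i s : idx i -> right_val rho (gamma i) s -> Dir s <> Dir (rho (gamma i)).
Proof.
  intros Hi Hs. pose proof (gamma_pos i Hi).
  destruct (proj2 (dir_jumps_iff (gamma i) ltac:(lra)) (ex_intro _ i (conj Hi eq_refl)))
    as [s' [Hs' Hne]].
  rewrite (right_val_unique _ _ s s' Hs Hs'). exact Hne.
Qed.

Lemma gamma_gap i s : idx (S i) -> right_val rho (gamma i) s ->
  gamma i + dir_delay (Dir s) <= gamma (S i).
Proof.
  intros HSi Hs. pose proof (idx_pred i HSi) as Hi.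
  pose proof (gamma_pos i Hi). pose proof (gamma_incr i HSi).
  apply Rnot_lt_le; intro Hlt.
  (* Dir would have to jump again at gamma (S i), within the delay after gamma i where it persists *)
  pose proof (dir_change_persists (gamma i) s ltac:(lra) Hs (dir_jumps_at_gamma i s Hi Hs))
    as Hpersist.
  destruct (right_val_exists (gamma (S i)) ltac:(lra)) as [s' Hs'].
  apply (dir_jumps_at_gamma (S i) s' HSi Hs').
  rewrite (dir_on_piece i s Hi Hs (gamma (S i))) by (auto || lra).
  destruct Hs' as [e [He Hright]].
  assert (0 < Rmin e (gamma i + dir_delay (Dir s) - gamma (S i))) by (apply Rmin_glb_lt; lra).
  pose proof (Rmin_l e (gamma i + dir_delay (Dir s) - gamma (S i))).
  pose proof (Rmin_r e (gamma i + dir_delay (Dir s) - gamma (S i))).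
  set (m := Rmin e (gamma i + dir_delay (Dir s) - gamma (S i))) in *.
  rewrite <- (Hright (gamma (S i) + m / 2)) by lra.
  apply Hpersist. lra.
Qed.

Lemma dir_before_first b : 0 < b -> (idx 0%nat -> b <= gamma 0%nat) ->
  forall u, 0 <= u <= b -> Dir (rho u) = open.
Proof.
  intros Hb Hfirst u Hu. rewrite <- dir_at_0.
  apply (constant_from_no_jumps _ 0 b Dir_left_continuous); [lra | | lra].
  intros t Ht. apply dir_no_jump_before; [lra|]. intros HI. specialize (Hfirst HI). lra.
Qed.

Lemma gate_before_first b : 0 < b -> (idx 0%nat -> b <= gamma 0%nat) ->
  (forall u, 0 < u <= b -> GateStatus (rho u) = opened) /\
  (forall t, 0 < t < b -> ~ jumps_at rho (@GateStatus Tr) t).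
Proof.
  intros Hb Hfirst.
  destruct (right_val_exists 0 ltac:(lra)) as [s Hs].
  apply (gate_follows_dir 0 b s open); [lra | exact Hs | |].
  - destruct (run_step_Gate 0 s ltac:(lra) Hs) as [-> | ->];
      [exact gate_at_0 | rewrite dir_at_0; reflexivity].
  - intros u Hu. apply (dir_before_first b Hb Hfirst). lra.
Qed.

Lemma gate_at_gamma i : idx i -> GateStatus (rho (gamma i)) = gate_target (Dir (rho (gamma i))).
Proof.
  induction i as [|i IH]; intros Hi.
  - pose proof (gamma_pos 0 Hi).
    rewrite (dir_before_first (gamma 0%nat)) by (auto || lra).
    apply (gate_before_first (gamma 0%nat)); auto; lra.
  - pose proof (idx_pred i Hi) as Hi'. pose proof (gamma_pos i Hi'). pose proof (gamma_incr i Hi).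
    destruct (right_val_exists (gamma i) ltac:(lra)) as [s Hs].
    pose proof (dir_on_piece i s Hi' Hs) as HDir.
    destruct (gate_single_jump (gamma i) (gamma (S i)) (Dir s)) as (_ & _ & Hend).
    + lra.
    + exact (gamma_gap i s Hi Hs).
    + intros u Hu. apply HDir; lra.
    + apply not_eq_sym, (dir_jumps_at_gamma i s Hi' Hs).
    + exact (IH Hi').
    + rewrite Hend, (HDir (gamma (S i))); auto; lra.
Qed.

Lemma gate_single_jump_on_piece i b : idx i ->
  (idx (S i) -> b = gamma (S i)) -> (~ idx (S i) -> gamma i + d_close p + d_open p <= b) ->
  (exists t, gamma i < t < b /\ jumps_at rho (@GateStatus Tr) t) /\
  (forall t1 t2, gamma i <= t1 < b -> gamma i <= t2 < b ->
     jumps_at rho (@GateStatus Tr) t1 -> jumps_at rho (@GateStatus Tr) t2 -> t1 = t2).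
Proof.
  intros Hi HbS HbnS. pose proof (gamma_pos i Hi).
  destruct (right_val_exists (gamma i) ltac:(lra)) as [s Hs].
  destruct (gate_single_jump (gamma i) b (Dir s)) as (Hex & Huniq & _).
  - lra.
  - destruct (classic (idx (S i))) as [HS | HnS].
    + rewrite (HbS HS). exact (gamma_gap i s HS Hs).
    + specialize (HbnS HnS). destruct (Dir s); simpl; lra.
  - intros u Hu. apply (dir_on_piece i s Hi Hs); [lra|]. intros HS. rewrite (HbS HS) in Hu. lra.
  - apply not_eq_sym, (dir_jumps_at_gamma i s Hi Hs).
  - exact (gate_at_gamma i Hi).
  - auto.
Qed.

Lemma gate_no_jump_at_gamma i : idx i -> ~ jumps_at rho (@GateStatus Tr) (gamma i).
Proof.
  intros Hi [s [Hs Hne]]. pose proof (gamma_pos i Hi).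
  destruct (run_step_Gate (gamma i) s ltac:(lra) Hs) as [E | E]; [congruence|].
  rewrite <- gate_at_gamma in E; [congruence | exact Hi].
Qed.

Lemma gamma_unbounded : (forall i, idx i) -> forall t, exists k, t < gamma k.
Proof.
  intros Hall t.
  assert (Hm : 0 < Rmin (d_close p) (d_open p)) by (apply Rmin_glb_lt; lra).
  pose proof (Rmin_l (d_close p) (d_open p)). pose proof (Rmin_r (d_close p) (d_open p)).
  assert (Hgrow : forall i, gamma 0%nat + INR i * Rmin (d_close p) (d_open p) <= gamma i).
  { induction i as [|i IH]; [simpl; lra|].
    pose proof (gamma_pos i (Hall i)).
    destruct (right_val_exists (gamma i) ltac:(lra)) as [s Hs].
    pose proof (gamma_gap i s (Hall (S i)) Hs).
    assert (Rmin (d_close p) (d_open p) <= dir_delay (Dir s)) by (destruct (Dir s); simpl; lra).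
    rewrite S_INR. lra. }
  destruct (INR_archimed _ (t - gamma 0%nat) Hm) as [k Hk].
  exists k. pose proof (Hgrow k). lra.
Qed.

Lemma gamma_piece t : idx 0%nat -> gamma 0%nat <= t ->
  exists i, idx i /\ gamma i <= t /\ (idx (S i) -> t < gamma (S i)).
Proof.
  intros H0 Ht.
  assert (Hend : exists k, ~ idx k \/ t < gamma k).
  { destruct (classic (forall i, idx i)) as [Hall | Hnall].
    - destruct (gamma_unbounded Hall t) as [k Hk]. eauto.
    - apply not_all_ex_not in Hnall as [k Hk]. eauto. }
  destruct Hend as [k Hk]. induction k as [|k IH]; [destruct Hk; [contradiction | lra]|].
  destruct (classic (~ idx k \/ t < gamma k)) as [Hk' | Hk']; [exact (IH Hk')|].
  apply not_or_and in Hk' as [Hidxk Hle]. apply NNPP in Hidxk.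
  exists k. split; [exact Hidxk|]. split; [lra|].
  intros HS. destruct Hk as [Hnot | Hlt]; [contradiction | exact Hlt].
Qed.

Lemma gate_jump_in_piece i : idx i ->
  exists d, gamma i < d /\ (idx (S i) -> d < gamma (S i)) /\ jumps_at rho (@GateStatus Tr) d.
Proof.
  intros Hi.
  destruct (classic (idx (S i))) as [HS | HnS].
  - destruct (gate_single_jump_on_piece i (gamma (S i)) Hi) as [[d [Hd Hj]] _]; [auto | tauto |].
    exists d. split; [lra|]. split; [intros; lra | exact Hj].
  - destruct (gate_single_jump_on_piece i (gamma i + d_close p + d_open p) Hi) as [[d [Hd Hj]] _];
      [tauto | intros; lra |].
    exists d. split; [lra|]. split; [tauto | exact Hj].
Qed.

Lemma gate_jump_unique_in_piece i t1 t2 : idx i -> gamma i <= t1 -> gamma i <= t2 ->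
  (idx (S i) -> t1 < gamma (S i) /\ t2 < gamma (S i)) ->
  jumps_at rho (@GateStatus Tr) t1 -> jumps_at rho (@GateStatus Tr) t2 -> t1 = t2.
Proof.
  intros Hi Ht1 Ht2 HtS Hj1 Hj2.
  destruct (classic (idx (S i))) as [HS | HnS].
  - destruct (gate_single_jump_on_piece i (gamma (S i)) Hi) as [_ Huniq]; [auto | tauto |].
    specialize (HtS HS). apply Huniq; auto; lra.
  - set (b := Rmax (Rmax t1 t2) (gamma i + d_close p + d_open p) + 1).
    pose proof (Rmax_l (Rmax t1 t2) (gamma i + d_close p + d_open p)).
    pose proof (Rmax_r (Rmax t1 t2) (gamma i + d_close p + d_open p)).
    pose proof (Rmax_l t1 t2). pose proof (Rmax_r t1 t2).
    destruct (gate_single_jump_on_piece i b Hi) as [_ Huniq]; [tauto | unfold b; lra |].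
    apply Huniq; auto; unfold b; lra.
Qed.

Lemma gate_jump_in_some_piece t : 0 < t -> jumps_at rho (@GateStatus Tr) t ->
  exists i, idx i /\ gamma i < t /\ (idx (S i) -> t < gamma (S i)).
Proof.
  intros Ht Hj.
  destruct (classic (idx 0%nat /\ gamma 0%nat <= t)) as [[H0 Hle] | Hbefore].
  - destruct (gamma_piece t H0 Hle) as [i (Hi & Hit & HtS)].
    exists i. split; [exact Hi|]. split; [|exact HtS].
    destruct (Req_dec (gamma i) t) as [<- | Hne]; [|lra].
    exfalso. exact (gate_no_jump_at_gamma i Hi Hj).
  - exfalso.
    assert (Hb : exists b, t < b /\ (idx 0%nat -> b <= gamma 0%nat)).
    { destruct (classic (idx 0%nat)) as [H0 | Hn0].
      - exists (gamma 0%nat). split; [|lra]. apply Rnot_le_lt. intro; apply Hbefore; auto.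
      - exists (t + 1). split; [lra | contradiction]. }
    destruct Hb as [b [Htb Hb0]].
    apply (proj2 (gate_before_first b ltac:(lra) Hb0) t); [lra | exact Hj].
Qed.

Lemma gate_moments_interleave :
  exists delta : nat -> R,
    (forall i, idx i -> gamma i < delta i /\ (idx (S i) -> delta i < gamma (S i))) /\
    (forall t, pos_sig (GateOf rho) t <-> exists i, idx i /\ delta i = t).
Proof.
  destruct (functional_choice (fun i d => idx i ->
      gamma i < d /\ (idx (S i) -> d < gamma (S i)) /\ jumps_at rho (@GateStatus Tr) d))
    as [delta Hdelta].
  { intros i. destruct (classic (idx i)) as [Hi | Hni]; [|exists 0; tauto].
    destruct (gate_jump_in_piece i Hi) as [d Hd]. exists d. auto. }
  exists delta. split; [intros i Hi; destruct (Hdelta i Hi); tauto|].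
  intros t. unfold pos_sig, GateOf. split.
  - intros [Ht Hsig]. apply (significant_iff_jumps_at _ t GateStatus_left_continuous Ht) in Hsig.
    destruct (gate_jump_in_some_piece t Ht Hsig) as [i (Hi & Hit & HtS)].
    destruct (Hdelta i Hi) as (Hd & HdS & Hj).
    exists i. split; [exact Hi|].
    apply (gate_jump_unique_in_piece i); auto; lra.
  - intros [i [Hi <-]]. destruct (Hdelta i Hi) as (Hd & _ & Hj). pose proof (gamma_pos i Hi).
    split; [lra|]. apply (significant_iff_jumps_at _ _ GateStatus_left_continuous); [lra | exact Hj].
Qed.

End DirMoments.

End GateTiming.
End ControllerDiscipline.
End Run.

Theorem mainTheorem14 :
  forall (Tr : Type) (p : Params) (rho : Traj Tr),
    (exists l : list Tr, forall x, List.In x l) ->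
    0 < d_close p -> 0 < d_open p -> 0 < d_min p -> 0 < d_max p ->
    d_close p < d_min p -> d_min p <= d_max p ->
    d_min p >= d_close p + d_open p ->
    regular_run p rho ->
    Dir (rho 0) = open -> GateStatus (rho 0) = opened ->
    (* (1) infinitely many positive significant moments of Dir *)
    (forall gamma : nat -> R,
       (forall i, gamma i < gamma (S i)) ->
       (forall t, pos_sig (DirOf rho) t <-> exists i, gamma i = t) ->
       exists delta : nat -> R,
         (forall i, delta i < delta (S i)) /\
         (forall t, pos_sig (GateOf rho) t <-> exists i, delta i = t) /\
         (forall i, gamma i < delta i < gamma (S i)))
    /\
    (* (2) finitely many (n) positive significant moments of Dir *)
    (forall (n : nat) (gamma : nat -> R),
       (forall i, (S i < n)%nat -> gamma i < gamma (S i)) ->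
       (forall t, pos_sig (DirOf rho) t <-> exists i, (i < n)%nat /\ gamma i = t) ->
       exists delta : nat -> R,
         (forall i, (S i < n)%nat -> delta i < delta (S i)) /\
         (forall t, pos_sig (GateOf rho) t <-> exists i, (i < n)%nat /\ delta i = t) /\
         (forall i, (S i < n)%nat -> gamma i < delta i < gamma (S i)) /\
         (forall i, S i = n -> gamma i < delta i)).
Proof.
  intros Tr p rho Htracks Hdc Hdo _ _ Hlt _ Hgap Hreg HD0 HG0.
  destruct Hreg as (Hrun & Hinit & Htrains & Hctrl & _ & Hclose & Hopen).
  assert (HW : d_open p <= W p) by (unfold W; lra).
  pose proof (gate_moments_interleave p Tr rho Hrun Htracks Hinit Htrains Hctrl
                Hdc Hdo Hlt HW Hclose Hopen) as Hinterleave.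
  split.
  - intros gamma Hincr Hmoments.
    destruct (Hinterleave (fun _ => True) gamma HD0 HG0) as [delta [Hbetween Hdelta]];
      [auto | auto | intros t; rewrite Hmoments; firstorder |].
    exists delta. split; [|split].
    + intros i. destruct (Hbetween i I) as [_ HS], (Hbetween (S i) I) as [HSS _].
      specialize (HS I). lra.
    + intros t. rewrite Hdelta. firstorder.
    + intros i. destruct (Hbetween i I). auto.
  - intros n gamma Hincr Hmoments.
    destruct (Hinterleave (fun i => (i < n)%nat) gamma HD0 HG0) as [delta [Hbetween Hdelta]];
      [intros; lia | exact Hincr | exact Hmoments |].
    exists delta. split; [|split; [exact Hdelta | split]].
    + intros i Hi. destruct (Hbetween i ltac:(lia)) as [_ HS], (Hbetween (S i) Hi) as [HSS _].
      specialize (HS Hi). lra.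
    + intros i Hi. destruct (Hbetween i ltac:(lia)). auto.
    + intros i Hi. apply (Hbetween i). lia.
Qed.
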